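(* There is an absolute constant $c>0$ such that for every integer $n\ge1$ and every $q\in(0,\infty)$, $$\sup_{0\ne f\in\mathcal{T}_n}\frac{|f(0)|}{\|f\|_{L_q[0,1]}} \ge c^{1+1/q}(1+qn)^{2/q}.$$
   Context: For an integer $n\ge1$, $\mathcal{T}_n$ denotes the set of all functions $f:\mathbb{R}\to\mathbb{C}$ of the form $f(t)=\sum_{j=1}^n a_j e^{i\lambda_j t}$ with $a_j\in\mathbb{C}$ (possibly zero) and real exponents $\lambda_1<\lambda_2<\cdots<\lambda_n$. $\|f\|_{L_q[0,1]}=(\int_0^1|f(t)|^q\,dt)^{1/q}$. *)

(* real analysis via Stdlib Reals. Complex numbers are
   represented by pairs (real part, imaginary part). *)
From Stdlib Require Import Reals.
Open Scope R_scope.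

(* Nonnegative real power x^p for x >= 0, with the convention 0^p = 0 (p > 0).
   (Stdlib's Rpower 0 p = 1, which is why we guard it.) *)
Definition rpow (x p : R) : R := if Rle_dec x 0 then 0 else Rpower x p.

(* Real and imaginary parts of the exponential sum
   f(t) = sum_{j<n} a_j e^{i lam_j t}, with a_j = ar j + i ai j. *)
Fixpoint esum_re (n : nat) (ar ai lam : nat -> R) (t : R) : R :=
  match n with
  | O => 0
  | S m => esum_re m ar ai lam t + (ar m * cos (lam m * t) - ai m * sin (lam m * t))
  end.

Fixpoint esum_im (n : nat) (ar ai lam : nat -> R) (t : R) : R :=
  match n with
  | O => 0
  | S m => esum_im m ar ai lam t + (ar m * sin (lam m * t) + ai m * cos (lam m * t))
  end.

Definition esum_abs (n : nat) (ar ai lam : nat -> R) (t : R) : R :=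
  sqrt (Rsqr (esum_re n ar ai lam t) + Rsqr (esum_im n ar ai lam t)).

Definition strictly_incr (n : nat) (lam : nat -> R) : Prop :=
  forall i j : nat, (i < j)%nat -> (j < n)%nat -> lam i < lam j.

(* N = ||g||_{L_q[0,1]} = (int_0^1 |g|^q)^{1/q}, for g given by its modulus. *)
Definition Lq_norm_is (g : R -> R) (q N : R) : Prop :=
  exists pr : Riemann_integrable (fun t => rpow (g t) q) 0 1,
    N = rpow (RiemannInt pr) (1 / q).

(* The extremal function is f(t) = P(cos t - sin t) for a real polynomial P of degree
   d <= (n-1)/2: since cos t - sin t = ((1+i) e^{it} + (1-i) e^{-it})/2, such an f is a
   real-valued exponential sum with the frequencies j - d, j < n.  Take P = g^p with g a
   slightly lifted Fejér kernel G_m, where G_m(cos θ) = |Σ_{j<m} e^{ijθ}|²/m² has degree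
   m-1, G_m(1) = 1 and G_m(x)(1-x) <= 2/m².  As x = cos t - sin t leaves 1 with speed 1,
   g(x(t))² <= 5δ²/(δ²+t²) on [0,1] with δ = 4/m², so for pq >= 2 we get
   ∫_0^1 |f|^q <= ∫_0^1 g² <= 10δ while f(0) = 1.  Choosing p ≈ 2/q and m ≈ qn/4 gives
   |f(0)| / ‖f‖_q >= (m²/40)^{1/q}, which is the claim with c = e^{-10}. *)

From Stdlib Require Import Reals Lra Lia Psatz FunctionalExtensionality ZArith.
From Coquelicot Require Import Coquelicot.
Open Scope R_scope.

Definition cmul_re (a b : R) (ar ai : nat -> R) (j : nat) : R := a * ar j - b * ai j.
Definition cmul_im (a b : R) (ar ai : nat -> R) (j : nat) : R := a * ai j + b * ar j.

Lemma esum_plus n ar1 ai1 ar2 ai2 lam t :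
  esum_re n (fun j => ar1 j + ar2 j) (fun j => ai1 j + ai2 j) lam t
    = esum_re n ar1 ai1 lam t + esum_re n ar2 ai2 lam t /\
  esum_im n (fun j => ar1 j + ar2 j) (fun j => ai1 j + ai2 j) lam t
    = esum_im n ar1 ai1 lam t + esum_im n ar2 ai2 lam t.
Proof.
  induction n as [|n [IHre IHim]]; simpl; [split; ring|].
  rewrite IHre, IHim; split; ring.
Qed.

Lemma esum_cmul n a b ar ai lam t :
  esum_re n (cmul_re a b ar ai) (cmul_im a b ar ai) lam t
    = a * esum_re n ar ai lam t - b * esum_im n ar ai lam t /\
  esum_im n (cmul_re a b ar ai) (cmul_im a b ar ai) lam t
    = a * esum_im n ar ai lam t + b * esum_re n ar ai lam t.
Proof.
  unfold cmul_re, cmul_im.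
  induction n as [|n [IHre IHim]]; simpl; [split; ring|].
  rewrite IHre, IHim; split; ring.
Qed.

Lemma esum_shift_freq n ar ai lam s t :
  esum_re n ar ai (fun j => lam j + s) t
    = cos (s * t) * esum_re n ar ai lam t - sin (s * t) * esum_im n ar ai lam t /\
  esum_im n ar ai (fun j => lam j + s) t
    = sin (s * t) * esum_re n ar ai lam t + cos (s * t) * esum_im n ar ai lam t.
Proof.
  induction n as [|n [IHre IHim]]; simpl; [split; ring|].
  rewrite IHre, IHim, Rmult_plus_distr_r, cos_plus, sin_plus; split; ring.
Qed.

Lemma esum_ext_freq n ar ai lam lam' t :
  (forall j, (j < n)%nat -> lam j = lam' j) ->
  esum_re n ar ai lam t = esum_re n ar ai lam' t /\
  esum_im n ar ai lam t = esum_im n ar ai lam' t.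
Proof.
  induction n as [|n IHn]; intros Hlam; simpl; [split; ring|].
  destruct IHn as [-> ->]; [intros j Hj; apply Hlam; lia|].
  rewrite (Hlam n) by lia; split; ring.
Qed.

Lemma esum_S_front n ar ai lam t :
  esum_re (S n) ar ai lam t
    = (ar 0%nat * cos (lam 0%nat * t) - ai 0%nat * sin (lam 0%nat * t))
      + esum_re n (fun j => ar (S j)) (fun j => ai (S j)) (fun j => lam (S j)) t /\
  esum_im (S n) ar ai lam t
    = (ar 0%nat * sin (lam 0%nat * t) + ai 0%nat * cos (lam 0%nat * t))
      + esum_im n (fun j => ar (S j)) (fun j => ai (S j)) (fun j => lam (S j)) t.
Proof.
  induction n as [|n [IHre IHim]]; [simpl; split; ring|].
  change (esum_re (S (S n)) ar ai lam t) with
    (esum_re (S n) ar ai lam t + (ar (S n) * cos (lam (S n) * t) - ai (S n) * sin (lam (S n) * t))).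
  change (esum_im (S (S n)) ar ai lam t) with
    (esum_im (S n) ar ai lam t + (ar (S n) * sin (lam (S n) * t) + ai (S n) * cos (lam (S n) * t))).
  rewrite IHre, IHim; simpl; split; ring.
Qed.

Lemma esum_zero_coef n ar ai lam t :
  (forall j, (j < n)%nat -> ar j = 0 /\ ai j = 0) ->
  esum_re n ar ai lam t = 0 /\ esum_im n ar ai lam t = 0.
Proof.
  induction n as [|n IHn]; intros Hzero; simpl; [split; ring|].
  destruct IHn as [-> ->]; [intros j Hj; apply Hzero; lia|].
  destruct (Hzero n) as [-> ->]; [lia|]; split; ring.
Qed.

Lemma esum_pad_zero N k ar ai lam t :
  (forall j, (N <= j)%nat -> ar j = 0 /\ ai j = 0) ->
  esum_re (N + k) ar ai lam t = esum_re N ar ai lam t /\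
  esum_im (N + k) ar ai lam t = esum_im N ar ai lam t.
Proof.
  intros Hzero; induction k as [|k [IHre IHim]]; [rewrite Nat.add_0_r; split; reflexivity|].
  rewrite Nat.add_succ_r; simpl; rewrite IHre, IHim.
  destruct (Hzero (N + k)%nat) as [-> ->]; [lia|]; split; ring.
Qed.

Lemma esum_single n k c lam t : (k < n)%nat ->
  esum_re n (fun j => if Nat.eqb j k then c else 0) (fun _ => 0) lam t = c * cos (lam k * t) /\
  esum_im n (fun j => if Nat.eqb j k then c else 0) (fun _ => 0) lam t = c * sin (lam k * t).
Proof.
  induction n as [|n IHn]; intros Hk; [lia|]; simpl.
  destruct (Nat.eqb_spec n k) as [<-|Hnk].
  - destruct (esum_zero_coef n (fun j => if Nat.eqb j n then c else 0) (fun _ => 0) lam t)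
      as [-> ->]; [|split; ring].
    intros j Hj; destruct (Nat.eqb_spec j n); [lia|split; reflexivity].
  - destruct IHn as [-> ->]; [lia|split; ring].
Qed.

Definition centered_freq (d j : nat) : R := INR j - INR d.

Definition shift2 (c : nat -> R) (j : nat) : R :=
  match j with S (S k) => c k | _ => 0 end.

Lemma esum_centered_freq_down d ar ai t :
  (forall j, (2 * d + 1 <= j)%nat -> ar j = 0 /\ ai j = 0) ->
  esum_re (2 * S d + 1) ar ai (centered_freq (S d)) t
    = cos t * esum_re (2 * d + 1) ar ai (centered_freq d) t
      + sin t * esum_im (2 * d + 1) ar ai (centered_freq d) t /\
  esum_im (2 * S d + 1) ar ai (centered_freq (S d)) t
    = cos t * esum_im (2 * d + 1) ar ai (centered_freq d) t
      - sin t * esum_re (2 * d + 1) ar ai (centered_freq d) t.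
Proof.
  intros Hzero.
  replace (2 * S d + 1)%nat with (2 * d + 1 + 2)%nat by lia.
  destruct (esum_pad_zero (2 * d + 1) 2 ar ai (centered_freq (S d)) t Hzero) as [-> ->].
  destruct (esum_ext_freq (2 * d + 1) ar ai (centered_freq (S d))
              (fun j => centered_freq d j + -1) t) as [-> ->].
  { intros j _; unfold centered_freq; rewrite S_INR; ring. }
  destruct (esum_shift_freq (2 * d + 1) ar ai (centered_freq d) (-1) t) as [-> ->].
  replace (-1 * t) with (- t) by ring; rewrite cos_neg, sin_neg; split; ring.
Qed.

Lemma esum_centered_freq_up d ar ai t :
  esum_re (2 * S d + 1) (shift2 ar) (shift2 ai) (centered_freq (S d)) t
    = cos t * esum_re (2 * d + 1) ar ai (centered_freq d) t
      - sin t * esum_im (2 * d + 1) ar ai (centered_freq d) t /\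
  esum_im (2 * S d + 1) (shift2 ar) (shift2 ai) (centered_freq (S d)) t
    = sin t * esum_re (2 * d + 1) ar ai (centered_freq d) t
      + cos t * esum_im (2 * d + 1) ar ai (centered_freq d) t.
Proof.
  replace (2 * S d + 1)%nat with (S (S (2 * d + 1))) by lia.
  destruct (esum_S_front (S (2 * d + 1)) (shift2 ar) (shift2 ai) (centered_freq (S d)) t)
    as [-> ->].
  destruct (esum_S_front (2 * d + 1) (fun j => shift2 ar (S j)) (fun j => shift2 ai (S j))
              (fun j => centered_freq (S d) (S j)) t) as [-> ->]; cbn [shift2].
  change (fun j : nat => ar j) with ar; change (fun j : nat => ai j) with ai.
  destruct (esum_ext_freq (2 * d + 1) ar ai (fun j => centered_freq (S d) (S (S j)))
              (fun j => centered_freq d j + 1) t) as [-> ->].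
  { intros j _; unfold centered_freq; rewrite !S_INR; ring. }
  destruct (esum_shift_freq (2 * d + 1) ar ai (centered_freq d) 1 t) as [-> ->].
  rewrite Rmult_1_l; split; ring.
Qed.

Definition real_trig_poly (d : nat) (h : R -> R) : Prop :=
  exists ar ai : nat -> R,
    (forall j, (2 * d + 1 <= j)%nat -> ar j = 0 /\ ai j = 0) /\
    forall t, esum_re (2 * d + 1) ar ai (centered_freq d) t = h t /\
              esum_im (2 * d + 1) ar ai (centered_freq d) t = 0.

Lemma real_trig_poly_const c : real_trig_poly 0 (fun _ => c).
Proof.
  exists (fun j => if Nat.eqb j 0 then c else 0), (fun _ => 0); split.
  - intros j Hj; destruct (Nat.eqb_spec j 0); [lia|split; reflexivity].
  - intros t; destruct (esum_single (2 * 0 + 1) 0 c (centered_freq 0) t) as [-> ->]; [lia|].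
    unfold centered_freq; rewrite Rminus_0_r, Rmult_0_l, cos_0, sin_0; split; ring.
Qed.

Lemma real_trig_poly_horner d h c :
  real_trig_poly d h -> real_trig_poly (S d) (fun t => c + (cos t - sin t) * h t).
Proof.
  intros (ar & ai & Hzero & Hh).
  set (lo_re := cmul_re (/ 2) (- / 2) ar ai); set (lo_im := cmul_im (/ 2) (- / 2) ar ai).
  set (hi_re := shift2 (cmul_re (/ 2) (/ 2) ar ai));
    set (hi_im := shift2 (cmul_im (/ 2) (/ 2) ar ai)).
  exists (fun j => (lo_re j + hi_re j) + (if Nat.eqb j (S d) then c else 0)),
         (fun j => (lo_im j + hi_im j) + 0); split.
  - intros j Hj; destruct (Hzero j) as [Er Ei]; [lia|].
    unfold lo_re, lo_im, hi_re, hi_im, cmul_re, cmul_im; rewrite Er, Ei.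
    destruct (Nat.eqb_spec j (S d)) as [|_]; [lia|].
    destruct j as [|[|k]]; [lia|lia|]; cbn [shift2].
    destruct (Hzero k) as [-> ->]; [lia|split; ring].
  - intros t.
    destruct (esum_plus (2 * S d + 1) (fun j => lo_re j + hi_re j) (fun j => lo_im j + hi_im j)
                (fun j => if Nat.eqb j (S d) then c else 0) (fun _ => 0) (centered_freq (S d)) t)
      as [-> ->].
    destruct (esum_plus (2 * S d + 1) lo_re lo_im hi_re hi_im (centered_freq (S d)) t)
      as [-> ->].
    destruct (esum_single (2 * S d + 1) (S d) c (centered_freq (S d)) t) as [-> ->]; [lia|].
    replace (centered_freq (S d) (S d) * t) with 0 by (unfold centered_freq; ring).
    destruct (esum_centered_freq_down d lo_re lo_im t) as [-> ->].
    { intros j Hj; unfold lo_re, lo_im, cmul_re, cmul_im.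
      destruct (Hzero j Hj) as [-> ->]; split; ring. }
    unfold hi_re, hi_im.
    destruct (esum_centered_freq_up d (cmul_re (/ 2) (/ 2) ar ai) (cmul_im (/ 2) (/ 2) ar ai) t)
      as [-> ->].
    unfold lo_re, lo_im.
    destruct (esum_cmul (2 * d + 1) (/ 2) (- / 2) ar ai (centered_freq d) t) as [-> ->].
    destruct (esum_cmul (2 * d + 1) (/ 2) (/ 2) ar ai (centered_freq d) t) as [-> ->].
    destruct (Hh t) as [-> ->]; rewrite cos_0, sin_0; split; field.
Qed.

Inductive is_poly : nat -> (R -> R) -> Prop :=
  | is_poly_const c : is_poly 0 (fun _ => c)
  | is_poly_horner d Q c : is_poly d Q -> is_poly (S d) (fun x => c + x * Q x).

Lemma is_poly_ext d Q Q' : is_poly d Q -> (forall x, Q x = Q' x) -> is_poly d Q'.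
Proof. intros HQ HQQ'; replace Q' with Q; [exact HQ|]; apply functional_extensionality, HQQ'. Qed.

Lemma is_poly_S d Q : is_poly d Q -> is_poly (S d) Q.
Proof.
  induction 1 as [c|d Q c _ IH].
  - apply is_poly_ext with (fun x => c + x * 0); [|intros; ring].
    apply (is_poly_horner 0 (fun _ => 0)), is_poly_const.
  - now apply is_poly_horner.
Qed.

Lemma is_poly_le d d' Q : (d <= d')%nat -> is_poly d Q -> is_poly d' Q.
Proof. induction 1; auto using is_poly_S. Qed.

Lemma is_poly_cst d c : is_poly d (fun _ => c).
Proof. apply (is_poly_le 0); [lia|apply is_poly_const]. Qed.

Lemma is_poly_id : is_poly 1 (fun x => x).
Proof.
  apply is_poly_ext with (fun x => 0 + x * 1); [|intros; ring].
  apply (is_poly_horner 0 (fun _ => 1)), is_poly_const.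
Qed.

Lemma is_poly_plus d Q1 Q2 : is_poly d Q1 -> is_poly d Q2 -> is_poly d (fun x => Q1 x + Q2 x).
Proof.
  intros H1; revert Q2; induction H1 as [c1|d Q1 c1 _ IH]; intros Q2 H2; inversion H2; subst.
  - apply is_poly_const.
  - apply is_poly_ext with (fun x => (c1 + c) + x * (Q1 x + Q x)); [|intros; ring].
    now apply is_poly_horner, IH.
Qed.

Lemma is_poly_scal d Q a : is_poly d Q -> is_poly d (fun x => a * Q x).
Proof.
  induction 1 as [c|d Q c _ IH]; [apply is_poly_const|].
  apply is_poly_ext with (fun x => a * c + x * (a * Q x)); [|intros; ring].
  now apply is_poly_horner.
Qed.

Lemma is_poly_mult d1 Q1 d2 Q2 :
  is_poly d1 Q1 -> is_poly d2 Q2 -> is_poly (d1 + d2) (fun x => Q1 x * Q2 x).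
Proof.
  intros H1 H2; induction H1 as [c|d1 Q1 c _ IH]; simpl.
  - apply is_poly_ext with (fun x => c * Q2 x); [now apply is_poly_scal|intros; ring].
  - apply is_poly_ext with (fun x => c * Q2 x + (0 + x * (Q1 x * Q2 x))); [|intros; ring].
    apply is_poly_plus; [apply (is_poly_le d2); [lia|now apply is_poly_scal]|].
    now apply is_poly_horner.
Qed.

Lemma is_poly_pow d Q p : is_poly d Q -> is_poly (p * d) (fun x => Q x ^ p).
Proof.
  intros HQ; induction p as [|p IH]; simpl; [apply is_poly_const|].
  now apply is_poly_mult.
Qed.

Lemma is_poly_continuous d Q : is_poly d Q -> continuity Q.
Proof.
  induction 1 as [c|d Q c _ IH]; [now apply continuity_const|].
  apply continuity_plus; [now apply continuity_const|].
  apply continuity_mult; [apply derivable_continuous, derivable_id|exact IH].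
Qed.

Lemma real_trig_poly_of_poly d Q :
  is_poly d Q -> real_trig_poly d (fun t => Q (cos t - sin t)).
Proof.
  induction 1 as [c|d Q c _ IH]; [apply real_trig_poly_const|].
  now apply real_trig_poly_horner.
Qed.

Lemma exp_sum_of_poly d Q n : is_poly d Q -> (2 * d + 1 <= n)%nat ->
  exists ar ai, strictly_incr n (centered_freq d) /\
    forall t, esum_abs n ar ai (centered_freq d) t = Rabs (Q (cos t - sin t)).
Proof.
  intros HQ Hn; destruct (real_trig_poly_of_poly d Q HQ) as (ar & ai & Hzero & HF).
  exists ar, ai; split.
  - intros i j Hij _; unfold centered_freq; apply lt_INR in Hij; lra.
  - intros t; unfold esum_abs.
    replace n with (2 * d + 1 + (n - (2 * d + 1)))%nat by lia.
    destruct (esum_pad_zero (2 * d + 1) (n - (2 * d + 1)) ar ai (centered_freq d) t Hzero)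
      as [-> ->].
    destruct (HF t) as [-> ->]; rewrite Rsqr_0, Rplus_0_r; apply sqrt_Rsqr_abs.
Qed.

Fixpoint chebyshev (k : nat) (x : R) : R :=
  match k with
  | O => 1
  | S O => x
  | S ((S k') as k1) => 2 * x * chebyshev k1 x - chebyshev k' x
  end.

Lemma chebyshev_cos k th : chebyshev k (cos th) = cos (INR k * th).
Proof.
  enough (H : forall i, chebyshev i (cos th) = cos (INR i * th) /\
                        chebyshev (S i) (cos th) = cos (INR (S i) * th)) by apply H.
  clear k; intros k; induction k as [|k IH].
  - simpl; rewrite Rmult_0_l, Rmult_1_l, cos_0; split; reflexivity.
  - destruct IH as [IH0 IH1]; split; [exact IH1|].
    change (chebyshev (S (S k)) (cos th))
      with (2 * cos th * chebyshev (S k) (cos th) - chebyshev k (cos th)).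
    rewrite IH0, IH1, !S_INR.
    replace ((INR k + 1 + 1) * th) with ((INR k + 1) * th + th) by ring.
    replace (INR k * th) with ((INR k + 1) * th - th) by ring.
    rewrite cos_plus, cos_minus; ring.
Qed.

Lemma chebyshev_is_poly k : is_poly k (chebyshev k).
Proof.
  enough (H : forall i, is_poly i (chebyshev i) /\ is_poly (S i) (chebyshev (S i))) by apply H.
  clear k; intros k; induction k as [|k [IH0 IH1]]; [split; [apply (is_poly_const 1)|apply is_poly_id]|].
  split; [exact IH1|].
  apply is_poly_ext with (fun x => (2 * x) * chebyshev (S k) x + -1 * chebyshev k x);
    [|intros x; simpl; ring].
  apply is_poly_plus.
  - apply (is_poly_mult 1 (fun x => 2 * x)); [apply is_poly_scal, is_poly_id|exact IH1].
  - apply (is_poly_le k); [lia|now apply is_poly_scal].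
Qed.

Fixpoint sum_lt (m : nat) (f : nat -> R) : R :=
  match m with O => 0 | S k => sum_lt k f + f k end.

Lemma sum_lt_ext m f g : (forall j, (j < m)%nat -> f j = g j) -> sum_lt m f = sum_lt m g.
Proof.
  induction m as [|m IH]; intros Hfg; simpl; [reflexivity|].
  rewrite IH, Hfg; [reflexivity|lia|intros; apply Hfg; lia].
Qed.

Lemma sum_lt_plus m f g : sum_lt m (fun j => f j + g j) = sum_lt m f + sum_lt m g.
Proof. induction m as [|m IH]; simpl; [ring|rewrite IH; ring]. Qed.

Lemma sum_lt_scal m f a : sum_lt m (fun j => a * f j) = a * sum_lt m f.
Proof. induction m as [|m IH]; simpl; [ring|rewrite IH; ring]. Qed.

Lemma sum_lt_scal_r m f a : sum_lt m (fun j => f j * a) = sum_lt m f * a.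
Proof. induction m as [|m IH]; simpl; [ring|rewrite IH; ring]. Qed.

Lemma is_poly_sum_lt m d f :
  (forall j, (j < m)%nat -> is_poly d (f j)) -> is_poly d (fun x => sum_lt m (fun j => f j x)).
Proof.
  induction m as [|m IH]; intros Hf; simpl; [apply is_poly_cst|].
  apply is_poly_plus; [apply IH; intros; apply Hf; lia|apply Hf; lia].
Qed.

(* The Fejér kernel as a polynomial in x = cos θ, see [fejer_cos]. *)
Definition fejer (m : nat) (x : R) : R :=
  / (INR m * INR m) * sum_lt m (fun j => sum_lt m (fun l => chebyshev (j - l + (l - j)) x)).

Definition cos_sum (m : nat) (th : R) : R := sum_lt m (fun j => cos (INR j * th)).
Definition sin_sum (m : nat) (th : R) : R := sum_lt m (fun j => sin (INR j * th)).

Lemma fejer_is_poly m : is_poly (m - 1) (fejer m).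
Proof.
  apply is_poly_scal, is_poly_sum_lt; intros j Hj; apply is_poly_sum_lt; intros l Hl.
  apply (is_poly_le (j - l + (l - j))); [lia|apply chebyshev_is_poly].
Qed.

Lemma fejer_cos m th :
  fejer m (cos th) = / (INR m * INR m) * (cos_sum m th ^ 2 + sin_sum m th ^ 2).
Proof.
  unfold fejer; f_equal.
  transitivity (sum_lt m (fun j => cos (INR j * th) * cos_sum m th
                                   + sin (INR j * th) * sin_sum m th)).
  - apply sum_lt_ext; intros j _.
    unfold cos_sum, sin_sum; rewrite <- !sum_lt_scal, <- sum_lt_plus.
    apply sum_lt_ext; intros l _; rewrite chebyshev_cos.
    destruct (Nat.le_gt_cases j l).
    + replace (j - l + (l - j))%nat with (l - j)%nat by lia; rewrite minus_INR by lia.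
      rewrite Rmult_minus_distr_r, cos_minus; ring.
    + replace (j - l + (l - j))%nat with (j - l)%nat by lia; rewrite minus_INR by lia.
      rewrite Rmult_minus_distr_r, cos_minus; ring.
  - rewrite sum_lt_plus, !sum_lt_scal_r; fold (cos_sum m th) (sin_sum m th); ring.
Qed.

Lemma geometric_cos_sin_sum m th :
  (1 - cos th) * cos_sum m th + sin th * sin_sum m th = 1 - cos (INR m * th) /\
  (1 - cos th) * sin_sum m th - sin th * cos_sum m th = - sin (INR m * th).
Proof.
  unfold cos_sum, sin_sum; induction m as [|m [IHc IHs]]; simpl sum_lt.
  - rewrite Rmult_0_l, cos_0, sin_0; split; ring.
  - rewrite S_INR, Rmult_plus_distr_r, Rmult_1_l, cos_plus, sin_plus; split; nra.
Qed.

Lemma cos_sin_sum_sqr_mul_le m th :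
  (cos_sum m th ^ 2 + sin_sum m th ^ 2) * (1 - cos th) <= 2.
Proof.
  destruct (geometric_cos_sin_sum m th) as [Hc Hs].
  set (C := cos_sum m th) in *; set (S := sin_sum m th) in *.
  assert (E : ((1 - cos th) * C + sin th * S) ^ 2 + ((1 - cos th) * S - sin th * C) ^ 2
              = 2 * (1 - cos th) * (C ^ 2 + S ^ 2)).
  { pose proof (sin2_cos2 th) as H; unfold Rsqr in H; nra. }
  rewrite Hc, Hs in E.
  pose proof (sin2_cos2 (INR m * th)) as H; unfold Rsqr in H.
  pose proof (COS_bound (INR m * th)); nra.
Qed.

Lemma cos_sin_sum_sqr_le m th : cos_sum m th ^ 2 + sin_sum m th ^ 2 <= INR m ^ 2.
Proof.
  unfold cos_sum, sin_sum; induction m as [|m IH]; simpl sum_lt; [simpl; lra|].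
  rewrite S_INR.
  set (C := sum_lt m (fun j => cos (INR j * th))) in *.
  set (S := sum_lt m (fun j => sin (INR j * th))) in *.
  set (c := cos (INR m * th)); set (s := sin (INR m * th)).
  assert (Hcs : c ^ 2 + s ^ 2 = 1).
  { pose proof (sin2_cos2 (INR m * th)) as H; unfold Rsqr in H; unfold c, s; nra. }
  assert (Hm : 0 <= INR m) by apply pos_INR.
  assert (Hproj : (C * c + S * s) ^ 2 <= INR m ^ 2).
  { assert (E : (C * c + S * s) ^ 2 + (C * s - S * c) ^ 2 = (C ^ 2 + S ^ 2) * (c ^ 2 + s ^ 2))
      by ring.
    rewrite Hcs, Rmult_1_r in E; pose proof (pow2_ge_0 (C * s - S * c)); lra. }
  assert (C * c + S * s <= INR m) by nra.
  nra.
Qed.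

Lemma fejer_cos_bounds m th : (1 <= m)%nat ->
  0 <= fejer m (cos th) <= 1 /\ fejer m (cos th) * (1 - cos th) <= 2 / (INR m * INR m).
Proof.
  intros Hm; rewrite fejer_cos.
  assert (H1 : 1 <= INR m) by (apply (le_INR 1); lia).
  pose proof (cos_sin_sum_sqr_mul_le m th); pose proof (cos_sin_sum_sqr_le m th).
  assert (Hmm : 0 < INR m * INR m) by nra.
  assert (Hinv : 0 < / (INR m * INR m)) by now apply Rinv_0_lt_compat.
  split; [split|].
  - apply Rmult_le_pos; nra.
  - apply Rmult_le_reg_l with (INR m * INR m); [exact Hmm|].
    rewrite <- Rmult_assoc, Rinv_r by lra; nra.
  - unfold Rdiv; rewrite Rmult_assoc, (Rmult_comm 2).
    apply Rmult_le_compat_l; lra.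
Qed.

Lemma fejer_1 m : (1 <= m)%nat -> fejer m 1 = 1.
Proof.
  intros Hm; replace 1 with (cos 0) at 1 by apply cos_0; rewrite fejer_cos.
  assert (Hc : cos_sum m 0 = INR m).
  { unfold cos_sum; clear Hm; induction m as [|m IH]; simpl sum_lt; [reflexivity|].
    rewrite IH, Rmult_0_r, cos_0, (S_INR m); ring. }
  assert (Hs : sin_sum m 0 = 0).
  { unfold sin_sum; clear Hm Hc; induction m as [|m IH]; simpl sum_lt; [reflexivity|].
    rewrite IH, Rmult_0_r, sin_0; ring. }
  assert (1 <= INR m) by (apply (le_INR 1); lia).
  rewrite Hc, Hs; field; lra.
Qed.

Lemma cos_sub_sin_bounds t : 0 <= t <= 1 ->
  -1 <= cos t - sin t <= 1 /\ t / 2 <= 1 - (cos t - sin t).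
Proof.
  intros Ht; pose proof PI2_3_2; pose proof PI2_1.
  assert (Hs : 0 <= sin t) by (apply sin_ge_0; lra).
  assert (Hc : 0 <= cos t) by (apply cos_ge_0; lra).
  pose proof (sin2_cos2 t) as Hpyth; unfold Rsqr in Hpyth.
  pose proof (COS_bound t).
  assert (Hsin : t / 2 <= sin t).
  { destruct (sin_bound t 0) as [Hlow _]; [lra|lra|].
    unfold sin_approx, sin_term in Hlow; simpl in Hlow; nra. }
  split; [split|]; nra.
Qed.

Definition peak_width (m : nat) : R := 4 / (INR m * INR m).

(* The shift by half the width keeps the base positive, so its powers are continuous. *)
Definition peak_base (m : nat) (x : R) : R :=
  (fejer m x + peak_width m / 2) / (1 + peak_width m / 2).

Lemma peak_width_pos m : (1 <= m)%nat -> 0 < peak_width m.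
Proof.
  intros Hm; assert (1 <= INR m) by (apply (le_INR 1); lia).
  unfold peak_width; apply Rdiv_lt_0_compat; nra.
Qed.

Lemma peak_base_1 m : (1 <= m)%nat -> peak_base m 1 = 1.
Proof.
  intros Hm; pose proof (peak_width_pos m Hm).
  unfold peak_base; rewrite fejer_1 by exact Hm; field; lra.
Qed.

Lemma peak_is_poly m p : is_poly (p * (m - 1)) (fun x => peak_base m x ^ p).
Proof.
  apply is_poly_pow; unfold peak_base.
  apply is_poly_ext with
    (fun x => / (1 + peak_width m / 2) * (fejer m x + peak_width m / 2));
    [|intros; unfold Rdiv; ring].
  apply is_poly_scal, is_poly_plus; [apply fejer_is_poly|apply is_poly_cst].
Qed.

Lemma fejer_decay m t : (1 <= m)%nat -> 0 <= t <= 1 ->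
  0 <= fejer m (cos t - sin t) <= 1 /\ fejer m (cos t - sin t) * t <= peak_width m.
Proof.
  intros Hm Ht; destruct (cos_sub_sin_bounds t Ht) as [Hx Hdist].
  rewrite <- (cos_acos _ Hx).
  destruct (fejer_cos_bounds m (acos (cos t - sin t)) Hm) as [HG HGdist].
  rewrite cos_acos in * by exact Hx.
  split; [exact HG|].
  unfold peak_width; replace (4 / (INR m * INR m)) with (2 * (2 / (INR m * INR m)))
    by (unfold Rdiv; ring).
  nra.
Qed.

Lemma peak_base_bounds m t : (1 <= m)%nat -> 0 <= t <= 1 ->
  0 < peak_base m (cos t - sin t) <= 1 /\
  peak_base m (cos t - sin t) ^ 2 * (peak_width m ^ 2 + t ^ 2) <= 5 * peak_width m ^ 2.
Proof.
  intros Hm Ht; destruct (fejer_decay m t Hm Ht) as [[HG0 HG1] HGt].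
  pose proof (peak_width_pos m Hm) as Hw.
  unfold peak_base; set (G := fejer m (cos t - sin t)) in *; set (w := peak_width m) in *.
  assert (Hg_le : (G + w / 2) / (1 + w / 2) <= G + w / 2).
  { apply Rmult_le_reg_r with (1 + w / 2); [lra|].
    unfold Rdiv; rewrite Rmult_assoc, Rinv_l; nra. }
  assert (Hg1 : (G + w / 2) / (1 + w / 2) <= 1).
  { apply Rmult_le_reg_r with (1 + w / 2); [lra|].
    unfold Rdiv; rewrite Rmult_assoc, Rinv_l; lra. }
  assert (Hg0 : 0 < (G + w / 2) / (1 + w / 2)) by (apply Rdiv_lt_0_compat; lra).
  set (g := (G + w / 2) / (1 + w / 2)) in *.
  split; [lra|].
  assert (Hg2 : g ^ 2 <= 1) by nra.
  assert (Hgw : g ^ 2 * w ^ 2 <= 1 * w ^ 2) by (apply Rmult_le_compat_r; nra).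
  assert (Hgt : g * t <= 2 * w).
  { assert (g * t <= (G + w / 2) * t) by (apply Rmult_le_compat_r; lra). nra. }
  assert (0 <= g * t) by (apply Rmult_le_pos; lra).
  assert (g ^ 2 * t ^ 2 <= 4 * w ^ 2) by nra.
  nra.
Qed.

Lemma RiemannInt_lorentz_le c w : 0 <= c -> 0 < w ->
  exists pr : Riemann_integrable (fun t => c * w ^ 2 / (w ^ 2 + t ^ 2)) 0 1,
    RiemannInt pr <= 2 * c * w.
Proof.
  intros Hc Hw.
  assert (H : is_RInt (fun t => c * w ^ 2 / (w ^ 2 + t ^ 2)) 0 1
                (minus (c * w * atan (1 / w)) (c * w * atan (0 / w)))).
  { apply (is_RInt_derive (fun t => c * w * atan (t / w))).
    - intros x _; auto_derive; [lra|field; split; [nra|lra]].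
    - intros x _; apply (ex_derive_continuous (K := R_AbsRing) (V := R_NormedModule)).
      auto_derive; nra. }
  exists (ex_RInt_Reals_0 _ _ _ (ex_intro _ _ H)).
  rewrite <- RInt_Reals, (is_RInt_unique _ _ _ _ H).
  unfold minus, plus, opp; simpl.
  replace (0 / w) with 0 by (field; lra); rewrite atan_0.
  pose proof (atan_bound (1 / w)); pose proof PI_4.
  assert (0 <= c * w) by (apply Rmult_le_pos; lra).
  nra.
Qed.

Lemma Rpower_pow_le_sqr g p q : 0 < g <= 1 -> 0 < q -> 2 <= INR p * q ->
  Rpower (g ^ p) q <= g ^ 2.
Proof.
  intros Hg Hq Hpq; unfold Rpower.
  rewrite <- (exp_ln (g ^ 2)) by (apply pow_lt; lra).
  rewrite !ln_pow by lra.
  assert (Hln : ln g <= 0) by (rewrite <- ln_1; apply ln_le; lra).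
  assert (Hexp : q * (INR p * ln g) <= INR 2 * ln g) by (simpl; nra).
  destruct (Rle_lt_or_eq_dec _ _ Hexp) as [Hlt| ->];
    [left; now apply exp_increasing|right; reflexivity].
Qed.

Lemma peak_Rpower_continuous m p q t : (1 <= m)%nat -> 0 <= t <= 1 ->
  continuity_pt (fun t => Rpower (peak_base m (cos t - sin t) ^ p) q) t.
Proof.
  intros Hm Ht.
  assert (Hpos : 0 < peak_base m (cos t - sin t) ^ p)
    by (apply pow_lt; apply (peak_base_bounds m t Hm Ht)).
  change (continuity_pt (Ranalysis1.comp (fun u => Rpower u q)
                           (fun t => peak_base m (cos t - sin t) ^ p)) t).
  apply continuity_pt_comp.
  - change (continuity_pt (Ranalysis1.comp (fun x => peak_base m x ^ p)
                             (fun t => cos t - sin t)) t).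
    apply continuity_pt_comp.
    + apply continuity_pt_minus; [apply continuity_cos|apply continuity_sin].
    + apply (is_poly_continuous _ _ (peak_is_poly m p)).
  - apply continuity_pt_filterlim.
    change (continuous (fun u => exp (q * ln u)) (peak_base m (cos t - sin t) ^ p)).
    apply (ex_derive_continuous (K := R_AbsRing) (V := R_NormedModule)).
    auto_derive; exact Hpos.
Qed.

Lemma peak_Lq_integral_le m p q h : (1 <= m)%nat -> 0 < q -> 2 <= INR p * q ->
  (forall t, 0 <= t <= 1 -> h t = peak_base m (cos t - sin t) ^ p) ->
  exists pr : Riemann_integrable (fun t => rpow (h t) q) 0 1,
    RiemannInt pr <= 10 * peak_width m.
Proof.
  intros Hm Hq Hpq Hh.
  assert (Hrpow : forall t, 0 <= t <= 1 ->
            rpow (h t) q = Rpower (peak_base m (cos t - sin t) ^ p) q).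
  { intros t Ht; rewrite Hh by exact Ht; unfold rpow.
    destruct Rle_dec; [|reflexivity].
    pose proof (pow_lt _ p (proj1 (proj1 (peak_base_bounds m t Hm Ht)))); lra. }
  assert (pr : Riemann_integrable (fun t => rpow (h t) q) 0 1).
  { apply Riemann_integrable_ext with
      (fun t => Rpower (peak_base m (cos t - sin t) ^ p) q).
    - intros t Ht; rewrite Rmin_left, Rmax_right in Ht by lra; symmetry; apply Hrpow, Ht.
    - apply continuity_implies_RiemannInt; [lra|].
      intros t Ht; apply peak_Rpower_continuous; assumption. }
  pose proof (peak_width_pos m Hm) as Hw.
  destruct (RiemannInt_lorentz_le 5 (peak_width m) ltac:(lra) Hw) as [prL HL].
  exists pr; eapply Rle_trans; [|replace (10 * peak_width m) with (2 * 5 * peak_width m)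
                                  by ring; exact HL].
  apply RiemannInt_P19; [lra|]; intros t Ht.
  rewrite Hrpow by lra.
  destruct (peak_base_bounds m t Hm ltac:(lra)) as [Hg Hdecay].
  eapply Rle_trans; [apply Rpower_pow_le_sqr; assumption|].
  apply Rmult_le_reg_r with (peak_width m ^ 2 + t ^ 2); [nra|].
  unfold Rdiv; rewrite Rmult_assoc, Rinv_l by nra; lra.
Qed.

Lemma exists_nat_mul_between a q : 0 < a -> 0 < q -> exists p : nat, a <= INR p * q <= a + q.
Proof.
  intros Ha Hq; destruct (archimed (a / q)) as [Hup Hup1].
  assert (Haq : 0 < a / q) by (apply Rdiv_lt_0_compat; lra).
  assert (Hpos : (0 < up (a / q))%Z) by (apply lt_IZR; simpl; lra).
  exists (Z.to_nat (up (a / q))); rewrite INR_IZR_INZ, Z2Nat.id by lia.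
  set (k := IZR (up (a / q))) in *.
  assert (a / q * q = a) by (field; lra).
  split; nra.
Qed.

Lemma peak_parameters n q : (1 <= n)%nat -> 0 < q ->
  exists p m d : nat, 2 <= INR p * q /\ (1 <= m)%nat /\ (p * (m - 1) <= d)%nat /\
    (2 * d + 1 <= n)%nat /\ 1 + q * INR n <= (5 + 2 * q) * INR m.
Proof.
  intros Hn Hq.
  destruct (exists_nat_mul_between 2 q) as (p & Hp2 & Hp2q); [lra|exact Hq|].
  assert (Hp : (1 <= p)%nat) by (destruct p; [simpl in Hp2; lra|lia]).
  set (d := ((n - 1) / 2)%nat); set (m := (d / p + 1)%nat).
  assert (Hd : (2 * d + 1 <= n <= 2 * d + 2)%nat).
  { pose proof (Nat.div_mod (n - 1) 2 ltac:(lia)).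
    pose proof (Nat.mod_upper_bound (n - 1) 2 ltac:(lia)); unfold d; lia. }
  assert (Hpm : (d + 1 <= p * m)%nat).
  { pose proof (Nat.div_mod d p ltac:(lia)).
    pose proof (Nat.mod_upper_bound d p ltac:(lia)); unfold m; nia. }
  exists p, m, d; repeat split; [exact Hp2|unfold m; lia| |lia|].
  - unfold m; replace (d / p + 1 - 1)%nat with (d / p)%nat by lia.
    apply Nat.Div0.mul_div_le.
  - assert (Hn2 : INR n <= 2 * (INR p * INR m)).
    { rewrite <- mult_INR; replace 2 with (INR 2) by reflexivity; rewrite <- mult_INR.
      apply le_INR; lia. }
    assert (Hm : 1 <= INR m) by (apply (le_INR 1); unfold m; lia).
    assert (q * INR n <= 2 * (INR p * q) * INR m) by nra.
    nra.
Qed.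

Lemma ln_1000_le_10 : ln 1000 <= 10.
Proof.
  rewrite <- (ln_exp 10); apply ln_le; [lra|].
  replace 10 with (INR 10 * ln (exp 1)) at 1 by (rewrite ln_exp; simpl; ring).
  change (1000 <= Rpower (exp 1) (INR 10)); rewrite Rpower_pow by apply exp_pos.
  pose proof (exp_ineq1_le 1).
  assert (2 ^ 10 <= exp 1 ^ 10) by (apply pow_incr; lra).
  simpl in *; lra.
Qed.

Lemma sqr_mul_le_exp q L M I : 0 < q -> 1 <= M -> 0 <= L <= (5 + 2 * q) * M ->
  0 <= I <= 40 / (M * M) -> L ^ 2 * I <= 1000 * exp (2 * q).
Proof.
  intros Hq HM HL HI.
  assert (HLM : L ^ 2 <= ((5 + 2 * q) * M) ^ 2) by (apply pow_incr; lra).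
  assert (HIM : ((5 + 2 * q) * M) ^ 2 * I <= 40 * (5 + 2 * q) ^ 2).
  { replace (40 * (5 + 2 * q) ^ 2) with (((5 + 2 * q) * M) ^ 2 * (40 / (M * M)))
      by (field; lra).
    apply Rmult_le_compat_l; [apply pow2_ge_0|lra]. }
  assert (Hexp : (5 + 2 * q) ^ 2 <= (5 * exp q) ^ 2).
  { apply pow_incr; pose proof (exp_ineq1_le q); lra. }
  replace (2 * q) with (q + q) by ring; rewrite exp_plus.
  assert (L ^ 2 * I <= ((5 + 2 * q) * M) ^ 2 * I) by (apply Rmult_le_compat_r; lra).
  nra.
Qed.

Lemma mul_Rpower_lt_1 q L I y : 0 < q -> 0 < L -> 0 < I -> L ^ 2 * I <= 1000 * exp (2 * q) ->
  y < Rpower (exp (-10)) (1 + 1 / q) * Rpower L (2 / q) -> y * Rpower I (1 / q) < 1.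
Proof.
  intros Hq HL HI HLI Hy.
  assert (HIq : 0 < Rpower I (1 / q)) by apply exp_pos.
  destruct (Rle_or_lt y 0) as [Hy0|Hy0]; [nra|].
  apply Rlt_le_trans with
    (Rpower (exp (-10)) (1 + 1 / q) * Rpower L (2 / q) * Rpower I (1 / q));
    [now apply Rmult_lt_compat_r|].
  assert (Hln : 2 * ln L + ln I <= 10 + 2 * q).
  { pose proof ln_1000_le_10.
    replace (2 * ln L + ln I) with (ln (L ^ 2 * I))
      by (rewrite ln_mult, ln_pow by (try apply pow_lt; lra); simpl; ring).
    assert (ln (1000 * exp (2 * q)) = ln 1000 + 2 * q)
      by (rewrite ln_mult, ln_exp by (try apply exp_pos; lra); reflexivity).
    assert (ln (L ^ 2 * I) <= ln (1000 * exp (2 * q)))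
      by (apply ln_le; [apply Rmult_lt_0_compat; [apply pow_lt|]; lra|exact HLI]).
    lra. }
  unfold Rpower; rewrite ln_exp, <- !exp_plus.
  apply Rlt_le, Rlt_le_trans with (exp 0); [apply exp_increasing|rewrite exp_0; lra].
  replace ((1 + 1 / q) * -10 + 2 / q * ln L + 1 / q * ln I)
    with (/ q * (2 * ln L + ln I - 10 * q - 10)) by (field; lra).
  assert (0 < / q) by (apply Rinv_0_lt_compat; lra).
  nra.
Qed.

Theorem theorem2p7 :
  exists c : R, 0 < c /\
    forall (n : nat) (q : R), (1 <= n)%nat -> 0 < q ->
      forall y : R,
        y < Rpower c (1 + 1 / q) * Rpower (1 + q * INR n) (2 / q) ->
        exists (ar ai lam : nat -> R) (N : R),
          strictly_incr n lam /\
          (exists t : R, esum_abs n ar ai lam t <> 0) /\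
          Lq_norm_is (esum_abs n ar ai lam) q N /\
          y * N < esum_abs n ar ai lam 0.
Proof.
  exists (exp (-10)); split; [apply exp_pos|].
  intros n q Hn Hq y Hy.
  destruct (peak_parameters n q Hn Hq) as (p & m & d & Hpq & Hm & Hdeg & Hdn & HnM).
  destruct (exp_sum_of_poly d (fun x => peak_base m x ^ p) n
              (is_poly_le _ _ _ Hdeg (peak_is_poly m p)) Hdn) as (ar & ai & Hincr & Hf).
  assert (Hpeak : forall t, 0 <= t <= 1 ->
            esum_abs n ar ai (centered_freq d) t = peak_base m (cos t - sin t) ^ p).
  { intros t Ht; rewrite Hf; apply Rabs_pos_eq, pow_le.
    destruct (peak_base_bounds m t Hm Ht); lra. }
  assert (Hf0 : esum_abs n ar ai (centered_freq d) 0 = 1).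
  { rewrite Hpeak, cos_0, sin_0, Rminus_0_r, peak_base_1 by (lra || exact Hm); apply pow1. }
  destruct (peak_Lq_integral_le m p q _ Hm Hq Hpq Hpeak) as [pr HI].
  exists ar, ai, (centered_freq d), (rpow (RiemannInt pr) (1 / q)).
  repeat split; [exact Hincr|exists 0; rewrite Hf0; lra|exists pr; reflexivity|].
  rewrite Hf0; unfold rpow; destruct Rle_dec as [|HIpos]; [lra|apply Rnot_le_lt in HIpos].
  assert (HM : 1 <= INR m) by (apply (le_INR 1); exact Hm).
  apply (mul_Rpower_lt_1 q (1 + q * INR n)); [lra|pose proof (pos_INR n); nra|lra| |exact Hy].
  apply (sqr_mul_le_exp q _ (INR m)); [lra|lra|split; [pose proof (pos_INR n); nra|lra]|].
  split; [lra|apply (Rle_trans _ _ _ HI); unfold peak_width, Rdiv; lra].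
Qed.
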